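(* Let $\Sigma$ be an alphabet, $L\subseteq\Sigma^*$ with $|L|\ge 2$, and $R:=\mathrm{lcs}(L)$. Fix any $xR\in L\setminus\{R\}$. Then there is some $yR\in L\setminus\{R\}$ such that $\mathrm{lcsext}(L)=\mathrm{lcs}(x^{\overleftarrow{\omega}},y^{\overleftarrow{\omega}})=\mathrm{lcs}(x^{\overleftarrow{\omega}},y^{\overleftarrow{\omega}},z^{\overleftarrow{\omega}})$ for all $zR\in L$. Moreover, if $xy=yx$, then $R\in L$.
   Context: Add a greatest element $\top$ to the words. For $w\in\Sigma^+$, $u\in\Sigma^*$, $w^{\overleftarrow{\omega}}u$ denotes the left-infinite (ultimately left-periodic) word $\cdots wwwu$; set $\varepsilon^{\overleftarrow{\omega}}:=\top$ and $\top w=w\top=\top$. The suffix order $u\preceq v$ means $u$ is a suffix of $v$, on finite words, ultimately left-periodic words and $\top$, with $\top$ the greatest element. $\mathrm{lcs}(L)$ (longest common suffix) is the infimum of $L$ w.r.t. this order ($\mathrm{lcs}(\emptyset)=\top$). For $L\subseteq\Sigma^*$ with $R=\mathrm{lcs}(L)$, the maximal suffix extension is $\mathrm{lcsext}(L):=\mathrm{lcs}(\{z^{\overleftarrow{\omega}}\mid zR\in L\})$. *)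

From mathcomp Require Import all_boot.
From Stdlib Require Import ClassicalEpsilon.
Set Implicit Arguments. Unset Strict Implicit. Unset Printing Implicit Defensive.

(* Generalized words over an alphabet T:
   - [Fin s]  : a finite word s (written left to right);
   - [Inf f]  : a left-infinite word ... f 2 f 1 f 0, i.e. [f i] is the i-th
                letter counted from the RIGHT end (i = 0 is the last letter);
   - [Top]    : the adjoined greatest element. *)
Inductive gword (T : Type) := Fin of seq T | Inf of (nat -> T) | Top.
Arguments Top {T}.

Section GWords.
Variable T : eqType.

Definition gle (u v : gword T) : Prop :=
  match u, v with
  | _, Top => True
  | Top, _ => False
  | Fin s, Fin t => suffix s t
  | Fin s, Inf f => s = rev (mkseq f (size s))
  | Inf _, Fin _ => False
  | Inf f, Inf g => f = g
  end.

(* z^{<-omega} = ... z z z ; with eps^{<-omega} = Top. *)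
Definition lpow (z : seq T) : gword T :=
  match z with
  | [::] => Top
  | a :: _ => Inf (fun i => nth a (rev z) (i %% size z))
  end.

Definition is_lcs (S : gword T -> Prop) (w : gword T) : Prop :=
  (forall v, S v -> gle w v) /\
  (forall u, (forall v, S v -> gle u v) -> gle u w).

Definition lcs (S : gword T -> Prop) : gword T :=
  epsilon (inhabits Top) (is_lcs S).

Definition lcs_lang (L : seq T -> Prop) : gword T :=
  lcs (fun v => exists w, L w /\ v = Fin w).

Definition lcsext (L : seq T -> Prop) : gword T :=
  lcs (fun v => exists z, (exists R, lcs_lang L = Fin R /\ L (z ++ R))
                          /\ v = lpow z).

End GWords.

From mathcomp Require Import all_boot zify.
From Stdlib Require Import Classical ClassicalEpsilon FunctionalExtensionality.
Set Implicit Arguments. Unset Strict Implicit. Unset Printing Implicit Defensive.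

(* The infimum M of the powers z^{<-omega} (zR in L) lies below x^{<-omega}.
   Either M = x^{<-omega}, and y := x works; or M is a finite word m, and the
   suffix of x^{<-omega} one letter longer than m is not a lower bound, so some
   y^{<-omega} leaves x^{<-omega} right after m, which makes m the lcs of the
   two.  If xy = yx then x^{<-omega} = y^{<-omega}, so M is infinite; were R
   not in L, every word of L would be zR with z a nonempty suffix of M, hence
   would end with (last letter of M) R, contradicting R = lcs(L). *)

Lemma take_mkseq (T : Type) (f : nat -> T) m n : m <= n ->
  take m (mkseq f n) = mkseq f m.
Proof. by move=> le_mn; rewrite /mkseq -map_take take_iota (minn_idPl le_mn). Qed.

Lemma ex_maxn_classic (P : nat -> Prop) n N : P n -> (forall k, P k -> k <= N) ->
  exists2 k, P k & forall k', P k' -> k' <= k.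
Proof.
pose Pb k := (excluded_middle_informative (P k) : bool).
have PbP k : reflect (P k) (Pb k) by apply: sumboolP.
move=> Pn bnd; have exPb : exists k, Pb k by exists n; apply/PbP.
have ubPb k : Pb k -> k <= N by move/PbP; apply: bnd.
case: (ex_maxnP exPb ubPb) => k /PbP Pk maxk.
by exists k => // k' /PbP; apply: maxk.
Qed.

Section SuffixOrder.
Variable T : eqType.
Implicit Types (S : gword T -> Prop) (u v w : gword T) (s t : seq T) (f g : nat -> T).

Definition inf_suffix f k : seq T := rev (mkseq f k).

Lemma size_inf_suffix f k : size (inf_suffix f k) = k.
Proof. by rewrite size_rev size_mkseq. Qed.

Lemma gle_inf_suffix f k : gle (Fin (inf_suffix f k)) (Inf f).
Proof. by rewrite /= size_inf_suffix. Qed.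

Lemma suffix_inf_suffix f m n : m <= n -> suffix (inf_suffix f m) (inf_suffix f n).
Proof. by move=> le_mn; rewrite suffix_rev prefixE size_mkseq take_mkseq. Qed.

Lemma suffix_inf_suffixE s f n : suffix s (inf_suffix f n) -> s = inf_suffix f (size s).
Proof.
move=> suf; have le_sn : size s <= n by rewrite -(size_inf_suffix f n) size_suffix.
move: suf; rewrite /suffix /inf_suffix revK prefixE size_rev take_mkseq //.
by move=> /eqP ->; rewrite revK.
Qed.

Lemma eq_inf_suffix f g n i : inf_suffix f n = inf_suffix g n -> i < n -> f i = g i.
Proof.
move=> /(congr1 rev); rewrite !revK => /(congr1 (nth (f i) ^~ i)) + lt_in.
by rewrite !nth_mkseq.
Qed.

Lemma gle_refl v : gle v v.
Proof. by case: v => //= s; exact: suffix_refl. Qed.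

Lemma gle0s v : gle (Fin [::]) v.
Proof. by case: v => //= t; exact: suffix0s. Qed.

Lemma gle_anti u v : gle u v -> gle v u -> u = v.
Proof.
case: u => [s|f|]; case: v => [t|g|] //=; last by move=> ->.
move=> /suffixP[[|c a] ->] // /size_suffix.
by rewrite size_cat /=; lia.
Qed.

Lemma gle_Top v : gle Top v -> v = Top.
Proof. by case: v. Qed.

Lemma gle_InfE f v : gle (Inf f) v -> v <> Top -> v = Inf f.
Proof. by case: v => //= g ->. Qed.

Lemma gle_trans u v w : gle u v -> gle v w -> gle u w.
Proof.
case: u => [s|f|]; case: v => [t|g|]; case: w => [r|h|] //=.
- exact: suffix_trans.
- by move=> st et; rewrite et in st; apply: suffix_inf_suffixE st.
- by move=> ? <-.
- by move=> -> ->.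
Qed.

Lemma suffix_of_gle s1 s2 v : v <> Top -> gle (Fin s1) v -> gle (Fin s2) v ->
  size s1 <= size s2 -> suffix s1 s2.
Proof.
case: v => [t|f|] //= _ + + le12.
  rewrite /suffix !prefixE !size_rev => /eqP <- /eqP <-.
  by rewrite take_takel.
by move=> -> ->; apply: suffix_inf_suffix.
Qed.

Lemma gle_Fin_extend m v : gle (Fin m) v -> Fin m <> v -> v <> Top ->
  exists2 p, size p = (size m).+1 & gle (Fin p) v.
Proof.
case: v => [t|f|] //= mt ne_mt _; last first.
  by exists (inf_suffix f (size m).+1); rewrite ?size_inf_suffix // gle_inf_suffix.
have lt_mt : size m < size t.
  rewrite ltn_neqAle size_suffix // andbT; apply/eqP => eq_mt; apply: ne_mt.
  by move: mt; rewrite suffixE eq_mt subnn drop0 => /eqP ->.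
exists (drop (size t - (size m).+1) t); last exact: suffix_drop.
by rewrite size_drop; lia.
Qed.

Lemma gle_Inf_of_suffixes f w :
  (forall n, exists2 s, n < size s & gle (Fin s) (Inf f) /\ gle (Fin s) w) ->
  gle (Inf f) w.
Proof.
case: w => [t|g|] // long.
  by have [s lt_ts [_ /size_suffix]] := long (size t); rewrite leqNgt lt_ts.
apply: functional_extensionality => i.
have [s lt_is [/= sf sg]] := long i.
by apply: (eq_inf_suffix (n := size s)) lt_is; rewrite /inf_suffix -sf -sg.
Qed.

Definition lowerb S u := forall v, S v -> gle u v.

Lemma is_lcs_equiv S S' w : (forall v, S v <-> S' v) -> is_lcs S w -> is_lcs S' w.
Proof.
move=> eqS [lbw maxw]; split=> [v /eqS|u lbu]; first exact: lbw.
by apply: maxw => v /eqS; apply: lbu.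
Qed.

Lemma lcs_eq S w : is_lcs S w -> lcs S = w.
Proof.
move=> lcs_w; have [lbe maxe] := epsilon_spec (inhabits Top) _ (ex_intro _ w lcs_w).
by apply: gle_anti; [apply: lcs_w.2 | apply: maxe; apply: lcs_w.1].
Qed.

Lemma is_lcs_mem S v : S v -> lowerb S v -> is_lcs S v.
Proof. by move=> Sv lbv; split=> // u; apply. Qed.

(* The lower bounds of S lie below any non-Top v0 in S, hence form a chain:
   take the longest finite one, or v0 itself if their lengths are unbounded. *)
Lemma lcs_exists S : exists w, is_lcs S w.
Proof.
have [[v0 Sv0 v0T]|allTop] := classic (exists2 v, S v & v <> Top); last first.
  exists Top; split=> [v Sv|[] //].
  by case: v Sv => // [s|f] Sv; case: allTop; [exists (Fin s) | exists (Inf f)].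
have [[N bnd]|unbnd] := classic (exists N, forall s, lowerb S (Fin s) -> size s <= N).
  pose P k := exists2 s, size s = k & lowerb S (Fin s).
  have P0 : P 0 by exists [::] => // v _; apply: gle0s.
  have ubP k : P k -> k <= N by case=> s <- /bnd.
  have [_ [s <- lbs] maxs] := ex_maxn_classic P0 ubP.
  exists (Fin s); split=> // [[s'|g|] lbu].
  - apply: suffix_of_gle v0T (lbu _ Sv0) (lbs _ Sv0) _.
    by apply: maxs; exists s'.
  - have lbg : lowerb S (Fin (inf_suffix g N.+1)).
      by move=> v Sv; apply: gle_trans (gle_inf_suffix g N.+1) (lbu v Sv).
    by have := bnd _ lbg; rewrite size_inf_suffix ltnn.
  - by case: v0T; apply: gle_Top (lbu _ Sv0).
case: v0 Sv0 v0T => [t|f|] // Sv0 _.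
  by case: unbnd; exists (size t) => s /(_ _ Sv0); apply: size_suffix.
exists (Inf f); apply: is_lcs_mem => // v Sv; apply: gle_Inf_of_suffixes => n.
have [s lbs lt_ns] : exists2 s, lowerb S (Fin s) & n < size s.
  apply: NNPP => short; apply: unbnd; exists n => s lbs.
  by rewrite leqNgt; apply/negP => lt_ns; apply: short; exists s.
by exists s => //; split; apply: lbs.
Qed.

Lemma lcs_spec S : is_lcs S (lcs S).
Proof. by have [w lcs_w] := lcs_exists S; rewrite (lcs_eq lcs_w). Qed.

Lemma is_lcs_pair S M a : is_lcs S M -> S a -> a <> Top ->
  exists2 b, S b /\ b <> Top & is_lcs (fun v => v = a \/ v = b) M.
Proof.
move=> [lbM maxM] Sa aT; have Ma := lbM a Sa.
have [eMa|neMa] := classic (M = a).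
  exists a => //; rewrite eMa.
  by split=> [v [] ->|u lbu]; [apply: gle_refl | apply: gle_refl | apply: lbu; left].
have [m eM] : exists m, M = Fin m.
  case: M neMa Ma {lbM maxM} => [m|g|] neMa Ma; first by exists m.
  - by case: neMa; rewrite (gle_InfE Ma aT).
  - by case: aT; apply: gle_Top.
subst M; have [p sp pa] := gle_Fin_extend Ma neMa aT.
(* [p] is one letter longer than [m], so it cannot be a lower bound of [S]. *)
have [b Sb pb] : exists2 b, S b & ~ gle (Fin p) b.
  apply: NNPP => all_p; have lbp : lowerb S (Fin p).
    by move=> v Sv; apply: NNPP => npv; apply: all_p; exists v.
  by have /size_suffix := maxM _ lbp; rewrite sp ltnn.
have bT : b <> Top by move=> eb; apply: pb; rewrite eb.
exists b => //; split=> [v [] ->|u lbu]; [exact: Ma | exact: lbM | ].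
have [ua ub] := (lbu a (or_introl erefl), lbu b (or_intror erefl)).
case: u ua ub {lbu} => [s|g|] ua ub.
- have [le_sm|lt_ms] := leqP (size s) (size m); first exact: suffix_of_gle ua Ma _.
  case: pb; apply: gle_trans ub; apply: suffix_of_gle aT pa ua _.
  by rewrite sp.
- by case: pb; rewrite (gle_InfE ub bT) -(gle_InfE ua aT).
- by case: aT; apply: gle_Top.
Qed.

Lemma is_lcs_widen S P Q M : is_lcs S M -> is_lcs P M ->
  (forall v, P v -> Q v) -> (forall v, Q v -> S v) -> is_lcs Q M.
Proof.
move=> [lbM _] [_ maxM] PQ QS; split=> [v /QS|u lbu]; first exact: lbM.
by apply: maxM => v /PQ; apply: lbu.
Qed.

End SuffixOrder.

Section Powers.
Variable T : eqType.
Implicit Types (a b s x y z : seq T).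

Lemma lpowE z d : z <> [::] -> lpow z = Inf (fun i => nth d (rev z) (i %% size z)).
Proof.
case: z => // c z _ /=; congr Inf; apply: functional_extensionality => i.
by apply: set_nth_default; rewrite size_rev ltn_pmod.
Qed.

Lemma lpow_neq_Top z : z <> [::] -> lpow z <> Top.
Proof. by case: z. Qed.

Lemma gle_lpow z : gle (Fin z) (lpow z).
Proof.
case: z => //= c z; rewrite -[LHS]revK; congr rev.
apply: (@eq_from_nth _ c); rewrite size_rev ?size_mkseq // => i lt_iz.
by rewrite nth_mkseq // modn_small.
Qed.

Lemma size_flatten_nseq k s : size (flatten (nseq k s)) = k * size s.
Proof. by rewrite size_flatten /shape map_nseq sumn_nseq mulnC. Qed.

Lemma nth_flatten_nseq d k s i : i < k * size s ->
  nth d (flatten (nseq k s)) i = nth d s (i %% size s).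
Proof.
elim: k i => [|k IHk] i //=; rewrite mulSn nth_cat => lt_i.
case: ltnP => [lt_is|le_si]; first by rewrite modn_small.
by rewrite IHk -?(modnDr (i - size s)) ?subnK // ltn_subLR.
Qed.

Lemma nth_flatten_nseq_mod d k s i : 0 < k ->
  nth d (flatten (nseq k s)) (i %% (k * size s)) = nth d s (i %% size s).
Proof.
move=> k_gt0; have [s0|s_gt0] := posnP (size s).
  by rewrite !nth_default ?size_flatten_nseq ?s0 ?muln0.
rewrite nth_flatten_nseq ?ltn_pmod ?muln_gt0 ?k_gt0 //.
by apply/eqP; rewrite modn_dvdm // dvdn_mull.
Qed.

Lemma flatten_nseq_comm a b k : a ++ b = b ++ a ->
  flatten (nseq k a) ++ b = b ++ flatten (nseq k a).
Proof.
move=> ab; elim: k => [|k IHk] /=; first by rewrite cats0.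
by rewrite -catA IHk !catA ab.
Qed.

Lemma flatten_nseq_size_comm a b : a ++ b = b ++ a ->
  flatten (nseq (size b) a) = flatten (nseq (size a) b).
Proof.
set p := flatten (nseq _ a); set q := flatten (nseq _ b) => ab.
have pb := flatten_nseq_comm (size b) ab.
have pq : p ++ q = q ++ p by apply/esym/flatten_nseq_comm.
have size_pq : size p = size q by rewrite !size_flatten_nseq mulnC.
by have := congr1 (take (size p)) pq; rewrite take_size_cat // size_pq take_size_cat.
Qed.

Lemma nth_mod_comm d a b i : a ++ b = b ++ a -> 0 < size a -> 0 < size b ->
  nth d a (i %% size a) = nth d b (i %% size b).
Proof.
move=> ab a_gt0 b_gt0.
rewrite -(nth_flatten_nseq_mod d a i b_gt0) -(nth_flatten_nseq_mod d b i a_gt0).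
by rewrite flatten_nseq_size_comm // mulnC.
Qed.

Lemma lpow_comm x y : x ++ y = y ++ x -> x <> [::] -> y <> [::] -> lpow x = lpow y.
Proof.
case: x => // d x xy _ y0; have y_gt0 : 0 < size y by case: y y0 {xy}.
rewrite !(lpowE d) //; congr Inf; apply: functional_extensionality => i.
rewrite -(size_rev (d :: x)) -(size_rev y); apply: nth_mod_comm; rewrite ?size_rev //.
by rewrite -!rev_cat xy.
Qed.

End Powers.

Section Lcsext.
Variables (T : eqType) (L : seq T -> Prop) (R : seq T).
Hypothesis lcs_L : lcs_lang L = Fin R.

Lemma is_lcs_lang : is_lcs (fun v => exists w, L w /\ v = Fin w) (Fin R).
Proof. by rewrite -lcs_L; apply: lcs_spec. Qed.

Lemma is_lcs_lcsext : is_lcs (fun v => exists2 z, L (z ++ R) & v = lpow z) (lcsext L).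
Proof.
apply: is_lcs_equiv (lcs_spec _) => v; split.
  by case=> z [[R' [eR' Lz]] ->]; move: eR' Lz; rewrite lcs_L => -[<-]; exists z.
by case=> z Lz ->; exists z; split=> //; exists R.
Qed.

Lemma mem_lcs_of_lcsext_Inf f : lcsext L = Inf f -> L R.
Proof.
move=> lcsext_f; apply: NNPP => LR; have [lbR maxR] := is_lcs_lang.
have [lbM _] := is_lcs_lcsext; rewrite lcsext_f in lbM.
have /size_suffix : gle (Fin (f 0 :: R)) (Fin R).
  apply: maxR => _ [w [Lw ->]] /=.
  have /suffixP[z ew] : suffix R w by apply: (lbR (Fin w)); exists w.
  subst w; have z0 : z <> [::] by move=> z0; apply: LR; rewrite z0 in Lw.
  have pow_z : lpow z = Inf f.
    by apply: gle_InfE (lpow_neq_Top z0); apply: lbM; exists z.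
  have suf_z : suffix (inf_suffix f 1) z.
    have := gle_lpow z; rewrite pow_z /= => ez; rewrite ez.
    by apply: suffix_inf_suffix; case: z z0 {Lw pow_z ez}.
  by rewrite -cat1s suffix_catl // eqxx.
by rewrite ltnn.
Qed.

End Lcsext.

Theorem lemma4 (T : finType) (L : seq T -> Prop) (R x : seq T) :
  (exists a b, L a /\ L b /\ a <> b) ->
  lcs_lang L = Fin R ->
  L (x ++ R) -> x ++ R <> R ->
  exists y : seq T,
    L (y ++ R) /\ y ++ R <> R /\
    lcsext L = lcs (fun v => v = lpow x \/ v = lpow y) /\
    (forall z : seq T, L (z ++ R) ->
       lcsext L = lcs (fun v => v = lpow x \/ v = lpow y \/ v = lpow z)) /\
    (x ++ y = y ++ x -> L R).
Proof.
move=> _ lcs_L Lx xR.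
have x0 : x <> [::] by move=> x0; apply: xR; rewrite x0.
have lcsext_L := is_lcs_lcsext lcs_L.
have Sx : exists2 z, L (z ++ R) & lpow x = lpow z by exists x.
have [_ [[y Ly ->] yT] lcs_xy] := is_lcs_pair lcsext_L Sx (lpow_neq_Top x0).
have y0 : y <> [::] by move=> y0; apply: yT; rewrite y0.
exists y; split=> //; split.
  by move/(congr1 size); rewrite size_cat; case: y y0 {Ly yT lcs_xy} => //= c y _; lia.
split; first by rewrite (lcs_eq lcs_xy).
split.
  move=> z Lz; apply/esym/lcs_eq; apply: is_lcs_widen lcsext_L lcs_xy _ _.
    by move=> v [->|->]; [left | right; left].
  by move=> v [->|[->|->]]; [exists x | exists y | exists z].
move=> /lpow_comm /(_ x0 y0) pow_xy.
have lcsext_x : lcsext L = lpow x.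
  apply: gle_anti; first by apply: lcs_xy.1; left.
  by apply: lcs_xy.2 => v [->|->]; rewrite ?pow_xy; apply: gle_refl.
move: lcsext_x; case: x x0 {Lx xR Sx lcs_xy pow_xy} => // c x _.
exact: mem_lcs_of_lcsext_Inf.
Qed.
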